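(* Let $\mathcal{A}$ be a Hopf algebra over $\mathbb{C}$ whose antipode $S$ satisfies $S^2=\mathrm{id}$, let $\Pi_\phi$ be a representation of $\mathcal{A}$ on $V$ and $|\phi_r\rangle\in V$. Define $\mathcal{T}_r=\{a\in\mathcal{A}:(\mathrm{id}\otimes\Pi_\phi)\Delta(a)(1\otimes|\phi_r\rangle)=a\otimes|\phi_r\rangle\}$ and $\mathcal{T}_l=\{a\in\mathcal{A}:(\Pi_\phi\otimes\mathrm{id})\Delta(a)(|\phi_r\rangle\otimes1)=|\phi_r\rangle\otimes a\}$. Then $S(\mathcal{T}_l)=\mathcal{T}_r$ and $S(\mathcal{T}_r)=\mathcal{T}_l$.
   Context: With $\Delta(a)=\sum a^{(1)}\otimes a^{(2)}$, $(\mathrm{id}\otimes\Pi_\phi)\Delta(a)(1\otimes|\phi_r\rangle)=\sum a^{(1)}\otimes\Pi_\phi(a^{(2)})|\phi_r\rangle\in\mathcal{A}\otimes V$ and $(\Pi_\phi\otimes\mathrm{id})\Delta(a)(|\phi_r\rangle\otimes1)=\sum \Pi_\phi(a^{(1)})|\phi_r\rangle\otimes a^{(2)}\in V\otimes\mathcal{A}$. *)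

From mathcomp Require Import all_boot all_algebra.
From mathcomp Require Import complex.
From mathcomp Require Import Rstruct.
Set Implicit Arguments. Unset Strict Implicit. Unset Printing Implicit Defensive.
Import GRing.Theory.
Local Open Scope ring_scope.

Definition Cx : fieldType := Rdefinitions.R[i].

(* An element of U (x) V is
   represented by a finite list of pure tensors [(u_1,v_1); ...], standing
   for sum_i u_i (x) v_i.  Two representatives denote the same tensor iff
   they agree under every bilinear map (universal property of U (x) V). *)
Definition bilinear_map (K : fieldType) (U V W : lmodType K)
  (B : U -> V -> W) : Prop :=
  (forall (k : K) u1 u2 v, B (k *: u1 + u2) v = k *: B u1 v + B u2 v) /\
  (forall (k : K) u v1 v2, B u (k *: v1 + v2) = k *: B u v1 + B u v2).

Definition tensor_eq (K : fieldType) (U V : lmodType K)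
  (s t : seq (U * V)) : Prop :=
  forall (W : lmodType K) (B : U -> V -> W), bilinear_map B ->
    \sum_(x <- s) B x.1 x.2 = \sum_(x <- t) B x.1 x.2.

(* Triple tensors U (x) V (x) X, same convention with trilinear maps. *)
Definition trilinear_map (K : fieldType) (U V X W : lmodType K)
  (B : U -> V -> X -> W) : Prop :=
  (forall (k : K) u1 u2 v x, B (k *: u1 + u2) v x = k *: B u1 v x + B u2 v x) /\
  (forall (k : K) u v1 v2 x, B u (k *: v1 + v2) x = k *: B u v1 x + B u v2 x) /\
  (forall (k : K) u v x1 x2, B u v (k *: x1 + x2) = k *: B u v x1 + B u v x2).

Definition tensor3_eq (K : fieldType) (U V X : lmodType K)
  (s t : seq (U * V * X)) : Prop :=
  forall (W : lmodType K) (B : U -> V -> X -> W), trilinear_map B ->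
    \sum_(x <- s) B x.1.1 x.1.2 x.2 = \sum_(x <- t) B x.1.1 x.1.2 x.2.

(* Hopf algebra structure (A, Delta, eps, S) on an algebra A over K.
   Delta a is a representative of the coproduct Delta(a) in A (x) A
   (Sweedler: Delta a = sum a(1) (x) a(2)). *)
Record is_hopf (K : fieldType) (A : algType K)
  (Delta : A -> seq (A * A)) (eps : A -> K) (S : A -> A) : Prop := {
  hopf_Delta_linear : forall (k : K) (a b : A),
    tensor_eq (Delta (k *: a + b))
              ([seq (k *: x.1, x.2) | x <- Delta a] ++ Delta b);
  hopf_Delta_mul : forall a b : A,
    tensor_eq (Delta (a * b))
              [seq (x.1 * y.1, x.2 * y.2) | x <- Delta a, y <- Delta b];
  hopf_Delta_one : tensor_eq (Delta 1) [:: (1, 1)];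
  hopf_coassoc : forall a : A,
    tensor3_eq [seq (y.1, y.2, x.2) | x <- Delta a, y <- Delta x.1]
               [seq (x.1, y.1, y.2) | x <- Delta a, y <- Delta x.2];
  hopf_eps_linear : forall (k : K) (a b : A), eps (k *: a + b) = k * eps a + eps b;
  hopf_eps_mul : forall a b : A, eps (a * b) = eps a * eps b;
  hopf_eps_one : eps 1 = 1;
  hopf_counit_l : forall a : A, \sum_(x <- Delta a) eps x.1 *: x.2 = a;
  hopf_counit_r : forall a : A, \sum_(x <- Delta a) eps x.2 *: x.1 = a;
  hopf_S_linear : forall (k : K) (a b : A), S (k *: a + b) = k *: S a + S b;
  hopf_antipode_l : forall a : A, \sum_(x <- Delta a) S x.1 * x.2 = eps a *: 1;
  hopf_antipode_r : forall a : A, \sum_(x <- Delta a) x.1 * S x.2 = eps a *: 1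
}.

Record is_representation (K : fieldType) (A : algType K) (V : lmodType K)
  (Pi : A -> V -> V) : Prop := {
  rep_linear_op : forall (a : A) (k : K) (v w : V),
    Pi a (k *: v + w) = k *: Pi a v + Pi a w;
  rep_linear_alg : forall (k : K) (a b : A) (v : V),
    Pi (k *: a + b) v = k *: Pi a v + Pi b v;
  rep_mul : forall (a b : A) (v : V), Pi (a * b) v = Pi a (Pi b v);
  rep_one : forall v : V, Pi 1 v = v
}.

Definition T_r (K : fieldType) (A : algType K) (V : lmodType K)
  (Delta : A -> seq (A * A)) (Pi : A -> V -> V) (phi : V) (a : A) : Prop :=
  tensor_eq [seq (x.1, Pi x.2 phi) | x <- Delta a] [:: (a, phi)].

Definition T_l (K : fieldType) (A : algType K) (V : lmodType K)
  (Delta : A -> seq (A * A)) (Pi : A -> V -> V) (phi : V) (a : A) : Prop :=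
  tensor_eq [seq (Pi x.1 phi, x.2) | x <- Delta a] [:: (phi, a)].

Definition image_set (A B : Type) (f : A -> B) (P : A -> Prop) : B -> Prop :=
  fun b => exists2 a, P a & f a = b.

From mathcomp Require Import all_boot all_algebra.
From mathcomp Require Import complex.
From mathcomp Require Import Rstruct.
Set Implicit Arguments. Unset Strict Implicit. Unset Printing Implicit Defensive.
Import GRing.Theory.
Local Open Scope ring_scope.

(* The antipode is an anti-coalgebra map, Delta (S a) = sum S a(2) (x) S a(1):
   both sides are convolution inverses of Delta in Hom(A, A (x) A), and
   convolution inverses are unique.  Applied to the antipode axiom for S a and
   combined with S^2 = id, this gives the twisted antipode identity
   sum S a(2) a(1) = eps a.  Now let a be in T_l.  Expanding Delta (S a) and
   using coassociativity, the defining equation of T_l acts on a(1), and the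
   twisted identity collapses Pi (S a(2)) Pi (a(1)) to eps; hence S a is in T_r.
   Symmetrically, S maps T_r into T_l using the ordinary antipode identity.  As
   S is an involution, these two inclusions are equalities. *)

Section Multilinear.
Variable K : fieldType.
Implicit Types U V W X Y : lmodType K.

Lemma linear_fun0 U W (f : U -> W) : linear f -> f 0 = 0.
Proof.
move=> hf; have := hf 1 0 0; rewrite scaler0 addr0 scale1r => e.
by apply: (addrI (f 0)); rewrite addr0 -e.
Qed.

Lemma linear_funZ U W (f : U -> W) : linear f -> forall k u, f (k *: u) = k *: f u.
Proof. by move=> hf k u; rewrite -[k *: u]addr0 hf (linear_fun0 hf) addr0. Qed.

Lemma linear_funD U W (f : U -> W) : linear f -> forall u v, f (u + v) = f u + f v.
Proof. by move=> hf u v; have := hf 1 u v; rewrite !scale1r. Qed.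

Lemma linear_fun_sum U W (f : U -> W) : linear f ->
  forall I (r : seq I) (F : I -> U), f (\sum_(i <- r) F i) = \sum_(i <- r) f (F i).
Proof.
move=> hf I r F; elim: r => [|i r IH]; first by rewrite !big_nil (linear_fun0 hf).
by rewrite !big_cons (linear_funD hf) IH.
Qed.

Lemma linear_idfun U : linear (fun u : U => u).
Proof. by []. Qed.

Lemma linear_comp U V W (f : V -> W) (g : U -> V) :
  linear f -> linear g -> linear (fun u => f (g u)).
Proof. by move=> hf hg k u v; rewrite hg hf. Qed.

Lemma linear_sumf U W I (r : seq I) (F : I -> U -> W) :
  (forall i, linear (F i)) -> linear (fun u => \sum_(i <- r) F i u).
Proof.
by move=> hF k u v; rewrite scaler_sumr -big_split; apply: eq_bigr => i _; apply: hF.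
Qed.

Lemma bilinear_mapP U V W (B : U -> V -> W) :
  (forall v, linear (B^~ v)) -> (forall u, linear (B u)) -> bilinear_map B.
Proof. by move=> h1 h2; split=> *; [apply: h1 | apply: h2]. Qed.

Lemma bilinear_map_linear_l U V W (B : U -> V -> W) v :
  bilinear_map B -> linear (B^~ v).
Proof. by case=> hB _ k x y; apply: hB. Qed.

Lemma bilinear_map_linear_r U V W (B : U -> V -> W) u :
  bilinear_map B -> linear (B u).
Proof. by case=> _ hB k x y; apply: hB. Qed.

Lemma bilinear_map_comp_l U V W X (B : U -> V -> W) (g : X -> U) v :
  bilinear_map B -> linear g -> linear (fun x => B (g x) v).
Proof. by move=> /(bilinear_map_linear_l v); apply: linear_comp. Qed.

Lemma bilinear_map_comp_r U V W X (B : U -> V -> W) (g : X -> V) u :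
  bilinear_map B -> linear g -> linear (fun x => B u (g x)).
Proof. by move=> /(bilinear_map_linear_r u); apply: linear_comp. Qed.

Lemma trilinear_mapP U V X W (B : U -> V -> X -> W) :
  (forall v x, linear (fun u => B u v x)) -> (forall u x, linear (fun v => B u v x)) ->
  (forall u v, linear (B u v)) -> trilinear_map B.
Proof. by move=> h1 h2 h3; split; [|split]=> *; [apply: h1 | apply: h2 | apply: h3]. Qed.

Lemma trilinear_map_comp1 U V X W Y (B : U -> V -> X -> W) (g : Y -> U) v x :
  trilinear_map B -> linear g -> linear (fun y => B (g y) v x).
Proof. by case=> hB _ hg k y z; rewrite hg hB. Qed.

Lemma trilinear_map_comp2 U V X W Y (B : U -> V -> X -> W) (g : Y -> V) u x :
  trilinear_map B -> linear g -> linear (fun y => B u (g y) x).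
Proof. by case=> _ [hB _] hg k y z; rewrite hg hB. Qed.

Lemma trilinear_map_comp3 U V X W Y (B : U -> V -> X -> W) (g : Y -> X) u v :
  trilinear_map B -> linear g -> linear (fun y => B u v (g y)).
Proof. by case=> _ [_ hB] hg k y z; rewrite hg hB. Qed.

Lemma bilinear_mul (A : algType K) : bilinear_map (@GRing.mul A).
Proof. by split=> k x y z; rewrite ?mulrDl ?mulrDr -?scalerAl -?scalerAr. Qed.

End Multilinear.

Section Hopf.
Variables (K : fieldType) (A : algType K).
Variables (Delta : A -> seq (A * A)) (eps : A -> K) (S : A -> A).
Hypothesis hopfA : is_hopf Delta eps S.
Implicit Types (U W : lmodType K) (a : A).

Let linear_S : linear S := hopf_S_linear hopfA.
Let linear_eps : linear (eps : A -> K^o) := hopf_eps_linear hopfA.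

Definition sweedler W (B : A -> A -> W) (a : A) : W := \sum_(x <- Delta a) B x.1 x.2.

Lemma eq_sweedler W (B B' : A -> A -> W) a : B =2 B' -> sweedler B a = sweedler B' a.
Proof. by move=> eqB; apply: eq_bigr => x _; apply: eqB. Qed.

Lemma linear_sweedler W U (B : A -> A -> W) (g : U -> A) :
  bilinear_map B -> linear g -> linear (fun u => sweedler B (g u)).
Proof.
move=> hB hg k u v; rewrite hg /sweedler (hopf_Delta_linear hopfA _ _ _ hB).
rewrite big_cat big_map scaler_sumr; congr (_ + _); apply: eq_bigr => x _ /=.
exact: (linear_funZ (bilinear_map_linear_l x.2 hB)).
Qed.

Ltac multilinear :=
  lazymatch goal with
  | |- bilinear_map _ =>
      first [ assumption | exact: bilinear_mul
            | apply: bilinear_mapP => ?; multilinear ]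
  | |- trilinear_map _ => first [ assumption | apply: trilinear_mapP => ? ?; multilinear ]
  | |- linear _ =>
      first [ exact: linear_idfun | assumption
            | apply: linear_sumf => ?; multilinear
            | apply: linear_sweedler; multilinear
            | apply: trilinear_map_comp1; multilinear
            | apply: trilinear_map_comp2; multilinear
            | apply: trilinear_map_comp3; multilinear
            | apply: bilinear_map_comp_l; multilinear
            | apply: bilinear_map_comp_r; multilinear
            | apply: linear_comp; multilinear ]
  end.

Lemma sweedler1 W (B : A -> A -> W) : bilinear_map B -> sweedler B 1 = B 1 1.
Proof. by move=> hB; rewrite /sweedler (hopf_Delta_one hopfA hB) big_seq1. Qed.

Lemma sweedlerM W (B : A -> A -> W) p q : bilinear_map B ->
  sweedler B (p * q) =
  sweedler (fun p1 p2 => sweedler (fun q1 q2 => B (p1 * q1) (p2 * q2)) q) p.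
Proof. by move=> hB; rewrite /sweedler (hopf_Delta_mul hopfA p q hB) big_allpairs_dep. Qed.

Lemma sweedler_coassoc W (g : A -> A -> A -> W) a : trilinear_map g ->
  sweedler (fun a1 a2 => sweedler (fun b1 b2 => g b1 b2 a2) a1) a =
  sweedler (fun a1 a2 => sweedler (g a1) a2) a.
Proof. by move=> hg; have := hopf_coassoc hopfA a hg; rewrite !big_allpairs_dep. Qed.

Lemma sweedler_counit_l W (f : A -> W) a : linear f ->
  sweedler (fun a1 a2 => eps a1 *: f a2) a = f a.
Proof.
move=> hf; rewrite -[in RHS](hopf_counit_l hopfA a) (linear_fun_sum hf).
by apply: eq_bigr => x _; rewrite (linear_funZ hf).
Qed.

Lemma sweedler_counit_r W (f : A -> W) a : linear f ->
  sweedler (fun a1 a2 => eps a2 *: f a1) a = f a.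
Proof.
move=> hf; rewrite -[in RHS](hopf_counit_r hopfA a) (linear_fun_sum hf).
by apply: eq_bigr => x _; rewrite (linear_funZ hf).
Qed.

Lemma sweedler_antipode_l W (f : A -> W) a : linear f ->
  sweedler (fun a1 a2 => f (S a1 * a2)) a = eps a *: f 1.
Proof.
by move=> hf; rewrite -(linear_funZ hf) -(hopf_antipode_l hopfA) (linear_fun_sum hf).
Qed.

Lemma sweedler_antipode_r W (f : A -> W) a : linear f ->
  sweedler (fun a1 a2 => f (a1 * S a2)) a = eps a *: f 1.
Proof.
by move=> hf; rewrite -(linear_funZ hf) -(hopf_antipode_r hopfA) (linear_fun_sum hf).
Qed.

Lemma eps_antipode a : eps (S a) = eps a.
Proof.
have linear_epsS : linear (fun b => eps (S b) : K^o) by multilinear.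
rewrite -(sweedler_counit_r a linear_epsS).
transitivity (sweedler (fun a1 a2 => eps (S a1 * a2) : K^o) a).
  by apply: (eq_sweedler (W := K^o)) => x y; rewrite (hopf_eps_mul hopfA) [RHS]mulrC.
by rewrite (sweedler_antipode_l a linear_eps) (hopf_eps_one hopfA) [_ *: _]mulr1.
Qed.

(* Delta * (Delta o S) = eta o eps, for the convolution product * on Hom(A, A (x) A). *)
Lemma Delta_conv_Delta_antipode W (C : A -> A -> W) a : bilinear_map C ->
  sweedler (fun a1 a2 => sweedler (fun u1 u2 =>
    sweedler (fun v1 v2 => C (u1 * v1) (u2 * v2)) (S a2)) a1) a = eps a *: C 1 1.
Proof.
move=> hC; transitivity (sweedler (fun a1 a2 => sweedler C (a1 * S a2)) a).
  by apply: eq_sweedler => a1 a2; rewrite sweedlerM.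
by rewrite sweedler_antipode_r ?sweedler1 //; multilinear.
Qed.

(* ((S (x) S) o flip o Delta) * Delta = eta o eps. *)
Lemma flip_antipode_conv_Delta W (C : A -> A -> W) a : bilinear_map C ->
  sweedler (fun a1 a2 => sweedler (fun b1 b2 =>
    sweedler (fun v1 v2 => C (S b2 * v1) (S b1 * v2)) a2) a1) a = eps a *: C 1 1.
Proof.
move=> hC.
rewrite (sweedler_coassoc (g := fun p q r =>
  sweedler (fun v1 v2 => C (S q * v1) (S p * v2)) r)) /=; last by multilinear.
transitivity (sweedler (fun a1 a2 => C 1 (S a1 * a2)) a); last first.
  by rewrite sweedler_antipode_l //; multilinear.
apply: eq_sweedler => a1 a2.
rewrite -(sweedler_coassoc (g := fun p q r => C (S p * q) (S a1 * r))) /=; last by multilinear.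
transitivity (sweedler (fun b1 b2 => eps b1 *: C 1 (S a1 * b2)) a2).
  apply: eq_sweedler => b1 b2.
  by rewrite (sweedler_antipode_l _ (f := C^~ (S a1 * b2))) //; multilinear.
by rewrite sweedler_counit_l //; multilinear.
Qed.

Lemma Delta_antipode W (B : A -> A -> W) a : bilinear_map B ->
  sweedler B (S a) = sweedler (fun a1 a2 => B (S a2) (S a1)) a.
Proof.
move=> hB.
(* nu = nu * (Delta * (Delta o S)) = (nu * Delta) * (Delta o S) = Delta o S *)
pose nu b := sweedler (fun b1 b2 => B (S b2) (S b1)) b.
pose g p q r := sweedler (fun x1 x2 => sweedler (fun v1 v2 =>
  sweedler (fun y1 y2 => B (S y2 * (x1 * v1)) (S y1 * (x2 * v2))) p) (S r)) q.
have nu_conv b1 b2 : eps b2 *: nu b1 = sweedler (g b1) b2.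
  pose C s t := sweedler (fun y1 y2 => B (S y2 * s) (S y1 * t)) b1.
  have -> : nu b1 = C 1 1 by apply: eq_sweedler => y1 y2; rewrite !mulr1.
  by rewrite -(Delta_conv_Delta_antipode _ (C := C)) //; multilinear.
have flip_conv b1 b2 :
    sweedler (fun u1 u2 => g u1 u2 b2) b1 = eps b1 *: sweedler B (S b2).
  rewrite /g /sweedler scaler_sumr.
  under eq_bigr => u _ do rewrite exchange_big.
  rewrite exchange_big; apply: eq_bigr => v _.
  have hBv : bilinear_map (fun s t => B (s * v.1) (t * v.2)) by multilinear.
  move: (flip_antipode_conv_Delta b1 hBv); rewrite /sweedler !mul1r => <-.
  apply: eq_bigr => u _; rewrite exchange_big; apply: eq_bigr => y _.
  by apply: eq_bigr => x _; rewrite !mulrA.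
rewrite -(sweedler_counit_l _ (f := fun b => sweedler B (S b))); last by multilinear.
rewrite -(eq_sweedler _ flip_conv) sweedler_coassoc; last by multilinear.
by rewrite -(eq_sweedler _ nu_conv) sweedler_counit_r //; multilinear.
Qed.

Lemma sweedler_antipode_twisted W (f : A -> W) a :
  (forall b, S (S b) = b) -> linear f ->
  sweedler (fun a1 a2 => f (S a2 * a1)) a = eps a *: f 1.
Proof.
move=> antipode_invol hf.
have hmulS : bilinear_map (fun u w : A => u * S w) by multilinear.
have twisted : sweedler (fun a1 a2 => S a2 * a1) a = eps a *: 1.
  move: (Delta_antipode a hmulS); rewrite (sweedler_antipode_r _ (f := id)) //=.
  by rewrite eps_antipode => ->; apply: eq_sweedler => a1 a2; rewrite antipode_invol.
by rewrite -(linear_funZ hf) -twisted /sweedler (linear_fun_sum hf).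
Qed.

Section Representation.
Variables (V : lmodType K) (Pi : A -> V -> V) (phi : V).
Hypothesis hPi : is_representation Pi.

Let bilinear_Pi : bilinear_map Pi.
Proof. by split=> *; [apply: (rep_linear_alg hPi) | apply: (rep_linear_op hPi)]. Qed.

Lemma T_lP a : T_l Delta Pi phi a <-> forall W (B : V -> A -> W), bilinear_map B ->
  sweedler (fun a1 a2 => B (Pi a1 phi) a2) a = B phi a.
Proof. by split=> hT W B /(hT W B); rewrite big_map big_seq1. Qed.

Lemma T_rP a : T_r Delta Pi phi a <-> forall W (B : A -> V -> W), bilinear_map B ->
  sweedler (fun a1 a2 => B a1 (Pi a2 phi)) a = B a phi.
Proof. by split=> hT W B /(hT W B); rewrite big_map big_seq1. Qed.

Lemma T_l_coassoc a W (g : V -> A -> A -> W) : T_l Delta Pi phi a -> trilinear_map g ->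
  sweedler (fun a1 a2 => sweedler (fun b1 b2 => g (Pi b1 phi) b2 a2) a1) a =
  sweedler (g phi) a.
Proof.
move=> /T_lP hT hg.
rewrite (sweedler_coassoc (g := fun p q r => g (Pi p phi) q r)); last by multilinear.
by apply: (hT _ (fun v w => sweedler (g v) w)); multilinear.
Qed.

Lemma T_r_coassoc a W (g : A -> A -> V -> W) : T_r Delta Pi phi a -> trilinear_map g ->
  sweedler (fun a1 a2 => sweedler (fun b1 b2 => g a1 b1 (Pi b2 phi)) a2) a =
  sweedler (fun a1 a2 => g a1 a2 phi) a.
Proof.
move=> /T_rP hT hg.
rewrite -(sweedler_coassoc (g := fun p q r => g p q (Pi r phi))); last by multilinear.
by apply: (hT _ (fun u v => sweedler (fun b1 b2 => g b1 b2 v) u)); multilinear.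
Qed.

Lemma antipode_T_l a : (forall b, S (S b) = b) ->
  T_l Delta Pi phi a -> T_r Delta Pi phi (S a).
Proof.
move=> antipode_invol hT; apply/T_rP => W B hB.
rewrite Delta_antipode; last by multilinear.
rewrite -(T_l_coassoc (g := fun v q r => B (S r) (Pi (S q) v))) //; last by multilinear.
transitivity (sweedler (fun a1 a2 => eps a1 *: B (S a2) phi) a); last first.
  by rewrite (sweedler_counit_l _ (f := fun b => B (S b) phi)) //; multilinear.
apply: eq_sweedler => a1 a2.
under eq_sweedler => b1 b2 do rewrite -(rep_mul hPi).
rewrite (sweedler_antipode_twisted _ (f := fun c => B (S a2) (Pi c phi))) //; last by multilinear.
by rewrite (rep_one hPi).
Qed.

Lemma antipode_T_r a : T_r Delta Pi phi a -> T_l Delta Pi phi (S a).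
Proof.
move=> hT; apply/T_lP => W B hB.
rewrite Delta_antipode; last by multilinear.
rewrite -(T_r_coassoc (g := fun p q v => B (Pi (S q) v) (S p))) //; last by multilinear.
transitivity (sweedler (fun a1 a2 => eps a2 *: B phi (S a1)) a); last first.
  by rewrite (sweedler_counit_r _ (f := fun b => B phi (S b))) //; multilinear.
apply: eq_sweedler => a1 a2.
under eq_sweedler => b1 b2 do rewrite -(rep_mul hPi).
rewrite (sweedler_antipode_l _ (f := fun c => B (Pi c phi) (S a1))) //; last by multilinear.
by rewrite (rep_one hPi).
Qed.

End Representation.
End Hopf.

Theorem lemma4 (A : algType Cx) (Delta : A -> seq (A * A)) (eps : A -> Cx)
  (S : A -> A) (V : lmodType Cx) (Pi : A -> V -> V) (phi : V) :
  is_hopf Delta eps S ->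
  (forall a : A, S (S a) = a) ->
  is_representation Pi ->
  (forall b : A, image_set S (T_l Delta Pi phi) b <-> T_r Delta Pi phi b) /\
  (forall b : A, image_set S (T_r Delta Pi phi) b <-> T_l Delta Pi phi b).
Proof.
move=> hopfA antipode_invol hPi.
have S_T_l a : T_l Delta Pi phi a -> T_r Delta Pi phi (S a).
  by apply: (antipode_T_l hopfA hPi).
have S_T_r a : T_r Delta Pi phi a -> T_l Delta Pi phi (S a).
  exact: (antipode_T_r hopfA hPi).
split=> b; split.
- by case=> a /S_T_l + <-.
- by move=> /S_T_r hb; exists (S b).
- by case=> a /S_T_r + <-.
- by move=> /S_T_l hb; exists (S b).
Qed.
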